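(* Let $\varphi:\mathfrak{h}\to V^*$ be a real or complex factorization structure of dimension $m$ and $j\in\{1,\ldots,m\}$, and let $U=\{\ell\in\mathbb{P}(V_j):\dim(\varphi(\mathfrak{h})\cap\Sigma^0_{j,\ell})=1\}$. Then there is a nonempty Zariski-open subset $W\subset U$ on which the map $\ell\mapsto\varphi^{-1}(\varphi(\mathfrak{h})\cap\Sigma^0_{j,\ell})\in\mathbb{P}(\mathfrak{h})$ is a regular map, given in homogeneous coordinates on $\mathbb{P}(V_j)$ and $\mathbb{P}(\mathfrak{h})$ by homogeneous polynomials of a common degree at most $m$.
   Context: $V_1,\ldots,V_m$ are 2-dimensional vector spaces over $\mathbb{F}=\mathbb{R}$ or $\mathbb{C}$, $V^*=V_1^*\otimes\cdots\otimes V_m^*$; for $\ell\in\mathbb{P}(V_j)$, $\Sigma^0_{j,\ell}=V_1^*\otimes\cdots\otimes\ell^0\otimes\cdots\otimes V_m^*$ with $\ell^0$ the annihilator of $\ell$ in slot $j$. A factorization structure of dimension $m$ is an injective linear map $\varphi:\mathfrak{h}\to V^*$, $\dim\mathfrak{h}=m+1$, with $\dim(\varphi(\mathfrak{h})\cap\Sigma^0_{j,\ell})=1$ for every $j$ and all $\ell$ in a nonempty Zariski-open subset of $\mathbb{P}(V_j)$. *)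

From HB Require Import structures.
From mathcomp Require Import all_boot all_order all_algebra.
From mathcomp Require Import reals.
From mathcomp.real_closed Require Import complex.
Set Implicit Arguments. Unset Strict Implicit. Unset Printing Implicit Defensive.
Import Order.TTheory GRing.Theory Num.Theory.
Local Open Scope ring_scope.

Section FactStruct.
Variable F : fieldType.

(* Each V_j is F^2 (row vectors 'rV[F]_2); a covector alpha in V_j^* is given by
   its coordinates in the dual basis, also a row vector 'rV[F]_2, acting by
   alpha(w) = alpha_0 w_0 + alpha_1 w_1. *)
Definition covec_app (alpha w : 'rV[F]_2) : F := \sum_(k < 2) alpha 0 k * w 0 k.

(* V^* = V_1^* (x) ... (x) V_m^*, represented by coefficient arrays indexed by
   multi-indices sigma : 'I_m -> 'I_2 (coordinates in the basis e^sigma_1 (x) ... ). *)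
Definition Vstar (m : nat) := {ffun {ffun 'I_m -> 'I_2} -> F^o}.

Definition pure_tensor (m : nat) (alpha : 'I_m -> 'rV[F]_2) : Vstar m :=
  [ffun sigma : {ffun 'I_m -> 'I_2} => \prod_(i < m) alpha i 0 (sigma i)].

Definition dual_basis (k : 'I_2) : 'rV[F]_2 := delta_mx 0 k.

(* generator of the annihilator ell^0 of the line ell = F v (v <> 0):
   w |-> v_1 w_0 - v_0 w_1 *)
Definition ann (v : 'rV[F]_2) : 'rV[F]_2 := \row_(k < 2) (if k == 0 then v 0 1 else - v 0 0).

Definition annihilator (v : 'rV[F]_2) : {vspace 'rV[F]_2} :=
  <[ann v]>%VS.

(* Sigma^0_{j,ell} = V_1^* (x) ... (x) ell^0 (x) ... (x) V_m^*, the span of the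
   tensor products of basis vectors of the factors (ell^0 spanned by ann v). *)
Definition Sigma0 (m : nat) (j : 'I_m) (v : 'rV[F]_2) : {vspace Vstar m} :=
  <<[seq pure_tensor (fun i => if i == j then ann v else dual_basis (sigma i))
     | sigma : {ffun 'I_m -> 'I_2}]>>%VS.

(* Binary forms: c = [:: c_0; ...; c_d] is the homogeneous polynomial
   sum_k c_k x^k y^(d-k) of degree d = size c - 1 (the empty list is 0). *)
Definition bform_eval (c : seq F) (v : 'rV[F]_2) : F :=
  \sum_(k < size c) c`_k * v 0 0 ^+ k * v 0 1 ^+ ((size c).-1 - k).

(* Points of P(V_j) = P^1 are represented by nonzero vectors v; a subset of
   P^1 is a predicate on nonzero vectors. *)
Definition zariski_open_P1 (W : 'rV[F]_2 -> Prop) : Prop :=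
  exists fs : seq (seq F), forall v, v != 0 ->
    (W v <-> has (fun c => bform_eval c v != 0) fs).

Definition nonempty_P1 (W : 'rV[F]_2 -> Prop) : Prop := exists v, v != 0 /\ W v.

Definition factorization_structure (m : nat) (phi : 'Hom('rV[F]_m.+1, Vstar m)) : Prop :=
  injective phi /\
  forall j : 'I_m, exists O : 'rV[F]_2 -> Prop,
    [/\ zariski_open_P1 O, nonempty_P1 O &
        forall v, v != 0 -> O v -> \dim (limg phi :&: Sigma0 j v)%VS = 1%N].

Definition hcoords (m d : nat) (P : 'I_m.+1 -> 'I_d.+1 -> F) (v : 'rV[F]_2) : 'rV[F]_m.+1 :=
  \row_(i < m.+1) \sum_(k < d.+1) P i k * v 0 0 ^+ k * v 0 1 ^+ (d - k).

Definition proposition2p1_over : Prop :=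
  forall (m : nat) (phi : 'Hom('rV[F]_m.+1, Vstar m)),
  factorization_structure phi ->
  forall j : 'I_m,
  let U := fun v : 'rV[F]_2 => \dim (limg phi :&: Sigma0 j v)%VS = 1%N in
  exists W : 'rV[F]_2 -> Prop,
    [/\ zariski_open_P1 W, nonempty_P1 W,
        (forall v, v != 0 -> W v -> U v) &
        exists d : nat, (d <= m)%N /\
        exists P : 'I_m.+1 -> 'I_d.+1 -> F,
          forall v, v != 0 -> W v ->
            hcoords P v != 0 /\
            (phi @^-1: (limg phi :&: Sigma0 j v))%VS = <[hcoords P v]>%VS].

End FactStruct.

From HB Require Import structures.
From mathcomp Require Import all_boot all_order all_algebra.
From mathcomp Require Import reals.
From mathcomp.real_closed Require Import complex.
From mathcomp Require Import ring zify.
Set Implicit Arguments. Unset Strict Implicit. Unset Printing Implicit Defensive.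
Import GRing.Theory.
Local Open Scope ring_scope.

(* For l = [v], Sigma0_{j,l} is the kernel of contraction with v in the j-th slot, so
   phi^-1(phi(h) :&: Sigma0_{j,l}) is the left kernel of an (m+1) x 2^m matrix M(v)
   depending linearly on v.  Where that kernel is a line, M(v) has rank m; after fixed
   row and column operations an m x m minor of M(v0) is the identity, so the determinant
   g(v) of the same minor of M(v) is a form of degree m with g(v0) <> 0.  Wherever
   g(v) <> 0, Cramer's rule spans the kernel by a vector of cofactors of M(v), which
   are forms of degree m in v. *)

Section BinaryForms.
Variable F : fieldType.
Implicit Types (f g : 'rV[F]_2 -> F).

Fixpoint homogeneous (d : nat) f : Prop :=
  match d with
  | 0 => exists c, forall v, f v = c
  | d'.+1 => exists g h, [/\ homogeneous d' g, homogeneous d' h &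
                             forall v, f v = v 0 0 * g v + v 0 1 * h v]
  end.

Lemma eq_homogeneous d f g : f =1 g -> homogeneous d f -> homogeneous d g.
Proof.
case: d => [|d] E /=.
  by case=> c Hc; exists c => v; rewrite -E.
by case=> g1 [h1 [H1 H2 H3]]; exists g1, h1; split => // v; rewrite -E.
Qed.

Lemma homogeneous0 d : homogeneous d (fun _ => 0).
Proof.
elim: d => [|d IH] /=; first by exists 0.
by exists (fun _ => 0), (fun _ => 0); split => // v; rewrite !mulr0 addr0.
Qed.

Lemma homogeneousD d f g :
  homogeneous d f -> homogeneous d g -> homogeneous d (fun v => f v + g v).
Proof.
elim: d f g => [|d IH] f g /=.
  by case=> a Ha [b Hb]; exists (a + b) => v; rewrite Ha Hb.
case=> g1 [h1 [G1 H1 E1]] [g2 [h2 [G2 H2 E2]]].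
exists (fun v => g1 v + g2 v), (fun v => h1 v + h2 v); split; try exact: IH.
by move=> v; rewrite E1 E2; ring.
Qed.

Lemma homogeneousZ d c f : homogeneous d f -> homogeneous d (fun v => c * f v).
Proof.
elim: d f => [|d IH] f /=.
  by case=> a Ha; exists (c * a) => v; rewrite Ha.
case=> g1 [h1 [G1 H1 E1]].
exists (fun v => c * g1 v), (fun v => c * h1 v); split; try exact: IH.
by move=> v; rewrite E1; ring.
Qed.

Lemma homogeneous_sum d I (r : seq I) (P : pred I) (G : I -> 'rV[F]_2 -> F) :
  (forall i, P i -> homogeneous d (G i)) ->
  homogeneous d (fun v => \sum_(i <- r | P i) G i v).
Proof.
move=> HG; elim: r => [|a r IH].
  by apply: eq_homogeneous (homogeneous0 d) => v; rewrite big_nil.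
case Pa: (P a).
  by apply: eq_homogeneous (homogeneousD (HG a Pa) IH) => v; rewrite big_cons Pa.
by apply: eq_homogeneous IH => v; rewrite big_cons Pa.
Qed.

Lemma homogeneousM d1 d2 f g :
  homogeneous d1 f -> homogeneous d2 g -> homogeneous (d1 + d2) (fun v => f v * g v).
Proof.
elim: d1 f => [|d IH] f /=.
  by case=> a Ha Hg; apply: eq_homogeneous (homogeneousZ a Hg) => v; rewrite Ha.
case=> g1 [h1 [G1 H1 E1]] Hg.
exists (fun v => g1 v * g v), (fun v => h1 v * g v); split; try exact: IH.
by move=> v; rewrite E1; ring.
Qed.

Lemma homogeneous_linear a b : homogeneous 1 (fun v => v 0 0 * a + v 0 1 * b).
Proof. by exists (fun _ => a), (fun _ => b); split => //; [exists a | exists b]. Qed.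

Lemma homogeneous_prod n (G : 'I_n -> 'rV[F]_2 -> F) :
  (forall i, homogeneous 1 (G i)) -> homogeneous n (fun v => \prod_(i < n) G i v).
Proof.
elim: n G => [|n IH] G HG; first by exists 1 => v; rewrite big_ord0.
have := homogeneousM (IH (fun i => G (widen_ord (leqnSn n) i)) (fun i => HG _)) (HG ord_max).
by rewrite addn1; apply: eq_homogeneous => v; rewrite big_ord_recr.
Qed.

Lemma homogeneous_det n (A : 'rV[F]_2 -> 'M[F]_n) :
  (forall i k, homogeneous 1 (fun v => A v i k)) -> homogeneous n (fun v => \det (A v)).
Proof.
move=> HA; apply: homogeneous_sum => s _.
by apply: homogeneousZ; apply: homogeneous_prod => i; apply: HA.
Qed.

Lemma homogeneous_adj n (A : 'rV[F]_2 -> 'M[F]_n.+1) :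
  (forall i k, homogeneous 1 (fun v => A v i k)) ->
  forall i k, homogeneous n (fun v => \adj (A v) i k).
Proof.
move=> HA i k; have := homogeneous_det (A := fun v => row' k (col' i (A v))).
move=> /(_ _) /(homogeneousZ ((-1) ^+ (k + i))) H.
apply: eq_homogeneous (H _) => [v|a b]; first by rewrite mxE.
by apply: eq_homogeneous (HA (lift k a) (lift i b)) => v; rewrite !mxE.
Qed.

Definition hsum d (c : nat -> F) (v : 'rV[F]_2) :=
  \sum_(k < d.+1) c k * v 0 0 ^+ k * v 0 1 ^+ (d - k).

Lemma homogeneous_coefs d f : homogeneous d f -> exists c, f =1 hsum d c.
Proof.
elim: d f => [|d IH] f /=.
  by case=> a Ha; exists (fun _ => a) => v; rewrite /hsum big_ord1 Ha !expr0 !mulr1.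
case=> g1 [h1 [/IH [a Ha] /IH [b Hb] E]].
exists (fun k => (if k is k'.+1 then a k' else 0) + (if (k < d.+1)%N then b k else 0)) => v.
rewrite E Ha Hb /hsum; under [RHS]eq_bigr do rewrite !mulrDl.
rewrite big_split /=; congr (_ + _).
  rewrite [RHS]big_ord_recl /= !mul0r add0r mulr_sumr; apply: eq_bigr => i _.
  by rewrite /bump /= add1n subSS exprS; ring.
rewrite [RHS]big_ord_recr /= ltnn !mul0r addr0 mulr_sumr; apply: eq_bigr => i _.
rewrite /= ltn_ord subSn -1?ltnS // exprS; ring.
Qed.

Lemma homogeneous_hsum d c : homogeneous d (hsum d c).
Proof.
elim: d c => [|d IH] c /=.
  by exists (c 0%N) => v; rewrite /hsum big_ord1 !expr0 !mulr1.
exists (hsum d (fun k => c k.+1)), (hsum d (fun k => if k == 0%N then c 0%N else 0)).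
split => // v; rewrite /hsum [LHS]big_ord_recl [X in _ = _ + _ * X]big_ord_recl /=.
rewrite [X in _ * (_ + X)]big1 ?addr0 ?subn0 => [|i _]; last by rewrite !mul0r.
rewrite mulr_sumr exprS addrC; congr (_ + _); last by ring.
by apply: eq_bigr => i _; rewrite /bump /= add1n subSS exprS; ring.
Qed.

Lemma bform_eval_mkseq d (c : nat -> F) : bform_eval (mkseq c d.+1) =1 hsum d c.
Proof.
by move=> v; rewrite /bform_eval /hsum size_mkseq; apply: eq_bigr => i _; rewrite nth_mkseq.
Qed.

Lemma homogeneous_bform_eval (c : seq F) : homogeneous (size c).-1 (bform_eval c).
Proof.
case: c => [|a c].
  by apply: eq_homogeneous (homogeneous0 0) => v; rewrite /bform_eval big_ord0.
exact: eq_homogeneous (homogeneous_hsum (size c) (nth 0 (a :: c))).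
Qed.

End BinaryForms.

Section Slices.
Variables (F : fieldType) (m : nat) (j : 'I_m).
Local Notation Vs := (Vstar F m).
Implicit Types (s t : {ffun 'I_m -> 'I_2}) (v : 'rV[F]_2) (T : Vs).

Definition upd s (b : 'I_2) : {ffun 'I_m -> 'I_2} := [ffun i => if i == j then b else s i].

Lemma upd_id s : upd s (s j) = s.
Proof. by apply/ffunP => i; rewrite ffunE; case: eqP => // ->. Qed.

Lemma upd_j s b : upd s b j = b.
Proof. by rewrite ffunE eqxx. Qed.

Lemma upd_upd s b c : upd (upd s b) c = upd s c.
Proof. by apply/ffunP => i; rewrite !ffunE; case: eqP. Qed.

Definition slice (b : 'I_2) T : Vs := [ffun s => T (upd s b)].

Definition contract v T : Vs := v 0 0 *: slice 0 T + v 0 1 *: slice 1 T.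

Lemma contract_is_linear v : linear (contract v).
Proof.
by move=> a T1 T2; apply/ffunP => s; rewrite !ffunE /GRing.scale /=; ring.
Qed.

HB.instance Definition _ v :=
  GRing.isLinear.Build F Vs Vs _ (contract v) (contract_is_linear v).

Lemma contractE v T s : contract v T s = v 0 0 * T (upd s 0) + v 0 1 * T (upd s 1).
Proof. by rewrite !ffunE. Qed.

Lemma ord2P (k : 'I_2) : k = 0 \/ k = 1.
Proof. by case: k => [[|[|k]]] Hk //; [left|right]; apply/val_inj. Qed.

Lemma ann0 v : ann v 0 0 = v 0 1. Proof. by rewrite mxE. Qed.
Lemma ann1 v : ann v 0 1 = - v 0 0. Proof. by rewrite mxE. Qed.

Lemma ann_neq0 v : v != 0 -> exists b, ann v 0 b != 0.
Proof.
move=> nz; apply/existsP; apply: contraNT nz => /existsPn ann_eq0.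
apply/eqP/matrixP => i k; rewrite (ord1 i) !mxE.
have := ann_eq0 (1 - k); rewrite negbK mxE; case: (ord2P k) => -> /=.
  by rewrite oppr_eq0 => /eqP.
by move/eqP.
Qed.

Definition Sigma0_gen v s : Vs :=
  pure_tensor (fun i => if i == j then ann v else dual_basis F (s i)).

Lemma Sigma0_genE v s t b : Sigma0_gen v s t = ann v 0 (t j) * (upd s b == upd t b)%:R.
Proof.
rewrite /Sigma0_gen /pure_tensor ffunE (bigD1 j) //= eqxx; congr (_ * _).
under eq_bigr => i ne do rewrite (negbTE ne) /dual_basis mxE eqxx eq_sym.
have [/ffunP eq_upd|] := eqVneq (upd s b) (upd t b).
  by apply: big1 => i ne; move: (eq_upd i); rewrite !ffunE (negbTE ne) => ->; rewrite eqxx.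
move=> /eqP neq_upd.
have [i neq_i] : exists i, upd s b i != upd t b i.
  apply/existsP; apply: contra_notT neq_upd => /existsPn eq_upd.
  by apply/ffunP => i; apply/eqP/negPn.
have [eq_ij|ne] := eqVneq i j; first by move: neq_i; rewrite eq_ij !upd_j eqxx.
by move: neq_i; rewrite !ffunE (negbTE ne) (bigD1 i) //= => /negbTE ->; rewrite mul0r.
Qed.

Lemma contract_Sigma0_gen v s : contract v (Sigma0_gen v s) = 0.
Proof.
apply/ffunP => t; rewrite contractE !(Sigma0_genE _ _ _ 0) !upd_upd !upd_j ffunE.
by rewrite ann0 ann1; ring.
Qed.

(* A tensor killed by contraction with v depends on its j-th argument only through
   the covector ann v. *)
Lemma contract_eq0_ann v T : contract v T = 0 ->
  forall t a b, ann v 0 a * T (upd t b) = ann v 0 b * T (upd t a).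
Proof.
move=> /ffunP vT t; have := vT t; rewrite contractE ffunE => vTt.
have E10 : ann v 0 1 * T (upd t 0) = ann v 0 0 * T (upd t 1).
  by rewrite ann0 ann1 mulNr; apply/eqP; rewrite eq_sym -addr_eq0 addrC vTt.
by move=> a b; case: (ord2P a) => ->; case: (ord2P b) => -> //.
Qed.

Lemma Sigma0P v T : v != 0 -> (T \in Sigma0 j v) = (contract v T == 0).
Proof.
move=> nz; apply/idP/idP => [T_Sigma0 | /eqP vT].
  rewrite -(lfunE (contract v)) -memv_ker; move: T T_Sigma0; apply/subvP.
  apply/span_subvP => _ /mapP [s _ ->].
  by rewrite memv_ker lfunE /= contract_Sigma0_gen.
have [b ann_b] := ann_neq0 nz.
have -> : T = \sum_(s : {ffun 'I_m -> 'I_2} | s j == b) (T s / ann v 0 b) *: Sigma0_gen v s.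
  apply/ffunP => t; rewrite sum_ffunE (bigD1 (upd t b)) ?upd_j //= big1 => [|s /andP [sj ne]].
    rewrite addr0 ffunE (Sigma0_genE _ _ _ b) upd_upd eqxx /GRing.scale /= mulr1.
    rewrite mulrAC [_ * ann v 0 _]mulrC (contract_eq0_ann vT t (t j) b) upd_id.
    by rewrite mulrAC mulfV // mul1r.
  rewrite ffunE (Sigma0_genE _ _ _ b) [upd s b](_ : _ = s); last by rewrite -(eqP sj) upd_id.
  by move: ne; case: eqP => // _ _; rewrite mulr0 /GRing.scale /= mulr0.
apply: (@memv_suml _ _ _ _ _ _ (Sigma0 j v)) => s _; apply/memvZ/memv_span.
by apply: map_f; rewrite mem_enum.
Qed.

End Slices.

Section Pencils.
Variable F : fieldType.

Definition pencil m n (M0 M1 : 'M[F]_(m, n)) (v : 'rV[F]_2) := v 0 0 *: M0 + v 0 1 *: M1.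

Lemma homogeneous_pencil m n p q (E : 'M[F]_(p, m)) (M0 M1 : 'M_(m, n)) (D : 'M_(n, q)) i k :
  homogeneous 1 (fun v => (E *m pencil M0 M1 v *m D) i k).
Proof.
apply: eq_homogeneous (homogeneous_linear ((E *m M0 *m D) i k) ((E *m M1 *m D) i k)) => v.
by rewrite /pencil mulmxDr mulmxDl -!scalemxAr -!scalemxAl !mxE.
Qed.

Lemma homogeneous_hcoords m d (x : 'rV[F]_2 -> 'rV[F]_m.+1) :
  (forall i, homogeneous d (fun v => x v 0 i)) ->
  exists P : 'I_m.+1 -> 'I_d.+1 -> F, forall v, hcoords P v = x v.
Proof.
move=> hx; have [c Hc] := fin_all_exists (fun i => homogeneous_coefs (hx i)).
by exists (fun i k => c i k) => v; apply/matrixP => a i; rewrite (ord1 a) mxE Hc.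
Qed.

Section LeftKernel.
Variable m : nat.
Implicit Types B : 'M[F]_(m.+1, m).

Local Notation minor B := (rowsub (lift ord_max) B).

(* Cramer's rule: when [minor B] is invertible, the left kernel of B is spanned by
   ([-row ord_max B *m \adj (minor B)], [\det (minor B)]). *)
Definition lker_vec B : 'rV[F]_m.+1 :=
  \row_i (if unlift ord_max i is Some i' then - (row ord_max B *m \adj (minor B)) 0 i'
          else \det (minor B)).

Lemma lker_vec_neq0 B : \det (minor B) != 0 -> lker_vec B != 0.
Proof.
by apply: contraNneq => /matrixP /(_ 0 ord_max); rewrite !mxE unlift_none => ->.
Qed.

Lemma lker_vec_span B y : \det (minor B) != 0 -> y *m B = 0 ->
  y = (y 0 ord_max / \det (minor B)) *: lker_vec B.
Proof.
move=> det_neq0 yB; set rl := row ord_max B; set y' := \row_i y 0 (lift ord_max i).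
have y'B : y' *m minor B = - (y 0 ord_max *: rl).
  apply/eqP; rewrite -subr_eq0 opprK -{}yB; apply/eqP/matrixP => a k.
  rewrite !mxE [RHS]big_ord_recr /= (ord1 a); congr (_ + _).
  apply: eq_bigr => i _; rewrite !mxE (_ : lift ord_max i = widen_ord (leqnSn m) i) //.
  exact/val_inj/lift_max.
have unit_minor : minor B \in unitmx by rewrite unitmxE unitfE.
have {}y'B : y' = - (y 0 ord_max *: rl) *m invmx (minor B) by rewrite -y'B mulmxK.
apply/matrixP => a i; rewrite (ord1 a) !mxE.
case: unliftP => [i'|] ->; last by rewrite divrK // unitfE.
have -> : y 0 (lift ord_max i') = y' 0 i' by rewrite mxE.
by rewrite y'B /invmx unit_minor -scalemxAr mulNmx -scalemxAl !mxE; ring.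
Qed.

End LeftKernel.

Lemma homogeneous_lker_vec n (B : 'rV[F]_2 -> 'M[F]_(n.+1, n)) :
  (forall i k, homogeneous 1 (fun v => B v i k)) ->
  forall i, homogeneous n (fun v => lker_vec (B v) 0 i).
Proof.
move=> hB i; have hminor a b : homogeneous 1 (fun v => rowsub (lift ord_max) (B v) a b).
  by apply: eq_homogeneous (hB _ b) => v; rewrite mxE.
case: (unliftP ord_max i) => [i'|] ->; last first.
  by apply: eq_homogeneous (homogeneous_det hminor) => v; rewrite mxE unlift_none.
clear i; case: n B hB hminor i' => [|n] B hB hminor i'; first by case: i'.
have := homogeneous_sum (index_enum 'I_n.+1) (P := xpredT)
  (fun k _ => homogeneousM (hB ord_max k) (homogeneous_adj hminor k i')).
move=> /(homogeneousZ (-1)); apply: eq_homogeneous => v.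
by rewrite mxE liftK !mxE mulN1r; congr (- _); apply: eq_bigr => k _; rewrite !mxE.
Qed.

Lemma rank_normal_form m n (A : 'M[F]_(m.+1, n)) : \rank A = m ->
  exists E (D : 'M_(n, m)), E \in unitmx /\ rowsub (lift ord_max) (E *m A *m D) = 1%:M.
Proof.
move=> rkA; exists (invmx (col_ebase A)), (invmx (row_ebase A) *m pid_mx m).
split; first by rewrite unitmx_inv col_ebase_unit.
have -> : invmx (col_ebase A) *m A *m (invmx (row_ebase A) *m pid_mx m)
          = pid_mx m :> 'M_(m.+1, m).
  have le_mn : (m <= n)%N by rewrite -rkA rank_leq_col.
  rewrite -{2}(mulmx_ebase A) rkA !mulmxA (mulVmx (col_ebase_unit A)) mul1mx.
  by rewrite (mulmxK (row_ebase_unit A)) mul_pid_mx minnn (minn_idPr le_mn).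
by apply/matrixP => i k; rewrite !mxE lift_max ltn_ord andbT.
Qed.

Lemma rank_lker_line n m (A : 'M[F]_(m.+1, n)) (V : {vspace 'rV[F]_m.+1}) :
  (forall x, (x \in V) = (x *m A == 0)) -> \dim V = 1%N -> \rank A = m.
Proof.
move=> VA dimV; have p_neq0 : vpick V != 0 by rewrite vpick0 -dimv_eq0 dimV.
have V_line : V = <[vpick V]>%VS.
  by apply/eqP; rewrite eq_sym eqEdim -memvE memv_pick dim_vline p_neq0 dimV.
have ker_p : (kermx A :=: vpick V)%MS.
  apply/eqmxP; rewrite sub_kermx -VA memv_pick andbT; apply/row_subP => i.
  have : row i (kermx A) \in <[vpick V]>%VS by rewrite -V_line VA -row_mul mulmx_ker row0.
  by case/vlineP => k ->; apply: scalemx_sub (submx_refl _).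
have := mxrank_ker A; rewrite ker_p; have := rank_leq_row A.
have -> : \rank (vpick V) = 1%N by apply/eqP; rewrite eqn_leq rank_leq_row lt0n mxrank_eq0.
lia.
Qed.

Lemma pencil_lker_line m n (M0 M1 : 'M[F]_(m.+1, n)) (v0 : 'rV[F]_2) :
  \rank (pencil M0 M1 v0) = m ->
  exists (g : 'rV[F]_2 -> F) (P : 'I_m.+1 -> 'I_m.+1 -> F),
    [/\ homogeneous m g, g v0 != 0 &
        forall v, g v != 0 -> hcoords P v != 0 /\
          forall x, x *m pencil M0 M1 v = 0 -> x \in <[hcoords P v]>%VS].
Proof.
move=> /rank_normal_form [E [D [unitE normal]]].
pose B v := E *m pencil M0 M1 v *m D.
pose g v := \det (rowsub (lift ord_max) (B v)).
have hB := homogeneous_pencil E M0 M1 D.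
have [P HP] : exists P : 'I_m.+1 -> 'I_m.+1 -> F, forall v, hcoords P v = lker_vec (B v) *m E.
  apply: homogeneous_hcoords => i.
  have := homogeneous_sum (index_enum 'I_m.+1) (P := xpredT)
    (fun k _ => homogeneousZ (E k i) (homogeneous_lker_vec hB k)).
  by apply: eq_homogeneous => v; rewrite mxE; apply: eq_bigr => k _; rewrite mulrC.
exists g, P; split.
- apply: (homogeneous_det (A := fun v => rowsub (lift ord_max) (B v))) => a b.
  by apply: eq_homogeneous (hB (lift ord_max a) b) => v; rewrite [RHS]mxE.
- by rewrite /g /B normal det1 oner_neq0.
move=> v gv; rewrite HP; split.
  by rewrite -(mul0mx _ E) (can_eq (mulmxK unitE)) lker_vec_neq0.
move=> x xM; apply/vlineP; exists ((x *m invmx E) 0 ord_max / g v).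
rewrite scalemxAl -lker_vec_span ?mulmxKV //.
by rewrite /B !mulmxA mulmxKV // xM !mul0mx.
Qed.

End Pencils.

Lemma zariski_open_P1I (F : fieldType) (O : 'rV[F]_2 -> Prop) d g :
  zariski_open_P1 O -> homogeneous d g -> zariski_open_P1 (fun v => O v /\ g v != 0).
Proof.
move=> [fs Ofs] hg.
have [gs Egs] : exists gs, forall v, has (fun c => bform_eval c v != 0) gs =
    has (fun c => bform_eval c v != 0) fs && (g v != 0).
  elim: fs {Ofs} => [|c fs [gs Egs]]; first by exists [::].
  have [e He] := homogeneous_coefs (homogeneousM (homogeneous_bform_eval c) hg).
  exists (mkseq e ((size c).-1 + d).+1 :: gs) => v /=.
  by rewrite Egs bform_eval_mkseq -He mulf_eq0 negb_or andb_orl.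
exists gs => v nz; rewrite Egs.
by split => [[/(Ofs v nz) -> ->] // | /andP [/(Ofs v nz) Ov gv]].
Qed.

Lemma dim_lpreim_inj (K : fieldType) (aT rT : vectType K) (f : 'Hom(aT, rT)) U :
  injective f -> (U <= limg f)%VS -> \dim (f @^-1: U) = \dim U.
Proof.
move=> /lker0P /eqP inj_f sUf.
by rewrite -(limg_dim_eq (f := f)) ?lpreimK // inj_f capv0.
Qed.

Section SliceMatrices.
Import VectorInternalTheory.
Variables (F : fieldType) (m : nat) (phi : 'Hom('rV[F]_m.+1, Vstar F m)) (j : 'I_m).

Definition slice_mx b := \matrix_i v2r (slice j b (phi (delta_mx 0 i))).

Lemma mul_pencil_slice_mx v x :
  x *m pencil (slice_mx 0) (slice_mx 1) v = v2r (contract j v (phi x)).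
Proof.
have -> : pencil (slice_mx 0) (slice_mx 1) v =
          \matrix_i v2r (contract j v (phi (delta_mx 0 i))).
  by apply/matrixP => i k; rewrite !mxE /contract /= linearD !linearZ !mxE.
rewrite mulmx_sum_row {2}(row_sum_delta x) !linear_sum; apply: eq_bigr => i _.
by rewrite rowK !linearZ.
Qed.

Lemma lpreim_Sigma0P v x : v != 0 ->
  (x \in phi @^-1: (limg phi :&: Sigma0 j v))%VS =
  (x *m pencil (slice_mx 0) (slice_mx 1) v == 0).
Proof.
move=> nz; rewrite -memv_preim memv_cap memv_img ?memvf // Sigma0P // mul_pencil_slice_mx.
by rewrite -(linear0 v2r) (inj_eq (@v2r_inj _ _)).
Qed.

End SliceMatrices.

Lemma proposition2p1_field (F : fieldType) : proposition2p1_over F.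
Proof.
move=> m phi [inj_phi generic] j; have [O [zO [v0 [nz0 Ov0]] dimO]] := generic j.
set M := pencil (slice_mx phi j 0) (slice_mx phi j 1).
have dim_lpreim v :
    \dim (phi @^-1: (limg phi :&: Sigma0 j v)) = \dim (limg phi :&: Sigma0 j v).
  exact: dim_lpreim_inj inj_phi (capvSl _ _).
have rank_v0 : \rank (M v0) = m.
  apply: (rank_lker_line (V := phi @^-1: (limg phi :&: Sigma0 j v0))).
    by move=> x; exact: lpreim_Sigma0P.
  by rewrite dim_lpreim dimO.
have [g [P [hg g_v0 lker_M]]] := pencil_lker_line rank_v0.
exists (fun v => O v /\ g v != 0); split.
- exact: zariski_open_P1I zO hg.
- by exists v0.
- by move=> v nz [Ov _]; apply: dimO.
exists m; split => //; exists P => v nz [Ov g_v]; have [P_neq0 lker_P] := lker_M v g_v.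
split => //; apply/eqP; rewrite eqEdim dim_vline P_neq0 dim_lpreim dimO // andbT.
by apply/subvP => x; rewrite lpreim_Sigma0P // => /eqP; apply: lker_P.
Qed.

Theorem proposition2p1 (R : realType) :
  proposition2p1_over R /\ proposition2p1_over R[i].
Proof. by split; apply: proposition2p1_field. Qed.
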